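(* Let $K\in\mathbb R$ and let $Q$ be a polynomial of the form $$Q(z)=-\frac14z^4+\frac K2z^2+iz+C$$ for some constant $C$, which can also be written as $$Q(z)=-\frac14(z-z_1)(z-z_2)(z-z_0)^2,\qquad z_0=-ai,\quad z_1=-b+ci,\quad z_2=b+ci,$$ with real parameters $a,b,c$ and $b>0$. Then $b$ is the unique positive real root of $b^6-2Kb^4-8=0$, the parameters $a$ and $c$ satisfy $a=c=\frac{2}{b^2}$, and $C=-\frac{b^6+4}{b^8}$. *)

(* R is an arbitrary real closed field (e.g. the reals), R[i] its complexification. *)
From mathcomp Require Import all_boot all_order all_algebra.
From mathcomp Require Export complex.
Set Implicit Arguments. Unset Strict Implicit. Unset Printing Implicit Defensive.
Import Order.TTheory GRing.Theory Num.Theory.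
Local Open Scope ring_scope.
Local Open Scope complex_scope.

Definition Qpoly (R : rcfType) (K : R) (C : R[i]) (z : R[i]) : R[i] :=
  - (4%:R)^-1 * z ^+ 4 + (K / 2%:R)%:C * z ^+ 2 + 'i * z + C.

Definition Qfact (R : rcfType) (a b c : R) (z : R[i]) : R[i] :=
  - (4%:R)^-1 * (z - Complex (- b) c) * (z - Complex b c) * (z - Complex 0 (- a)) ^+ 2.

From mathcomp Require Import all_boot all_order all_algebra.
From mathcomp Require Import complex ring lra.

(* Restricted to real z, the identity Q = Qfact splits into a real and an
   imaginary polynomial identity in z, whose coefficients give c = a,
   a b^2 = 2, K = b^2/2 - a^2 and C; the claims about b then follow by
   substitution. Uniqueness of the positive root of P(x) = x^6 - 2K x^4 - 8
   comes from y^4 P(x) - x^4 P(y) = (x^2 - y^2)(x^4 y^4 + 8 (x^2 + y^2)). *)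

Set Implicit Arguments.
Unset Strict Implicit.
Unset Printing Implicit Defensive.

Import Order.TTheory GRing.Theory Num.Theory.
Local Open Scope ring_scope.
Local Open Scope complex_scope.

Lemma cubic_fun_eq0 (R : realFieldType) (d0 d1 d2 d3 : R) :
  (forall x, d0 + d1 * x + d2 * x ^+ 2 + d3 * x ^+ 3 = 0) ->
  [/\ d0 = 0, d1 = 0, d2 = 0 & d3 = 0].
Proof.
move=> h; have := h 0; have := h 1; have := h (-1); have := h 2.
by rewrite !exprS !expr0 => h2 hm1 h1 h0; split; lra.
Qed.

Lemma even_quadratic_fun_eq0 (R : realFieldType) (d0 d2 : R) :
  (forall x, d0 + d2 * x ^+ 2 = 0) -> d0 = 0 /\ d2 = 0.
Proof.
move=> h; have [|-> _ -> _] // := @cubic_fun_eq0 R d0 0 d2 0.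
by move=> x; rewrite !mul0r !addr0.
Qed.

Lemma odd_cubic_fun_eq0 (R : realFieldType) (d0 d1 d3 : R) :
  (forall x, d0 + d1 * x + d3 * x ^+ 3 = 0) -> [/\ d0 = 0, d1 = 0 & d3 = 0].
Proof.
move=> h; have [|-> -> _ ->] // := @cubic_fun_eq0 R d0 d1 0 d3.
by move=> x; rewrite mul0r addr0.
Qed.

Lemma Qpoly_eq_Qfact_on_reals (R : rcfType) (K C1 C2 a b c : R) :
  (forall z, Qpoly K (Complex C1 C2) z = Qfact a b c z) -> forall x : R,
  C1 + (b ^+ 2 + c ^+ 2) * a ^+ 2 / 4%:R
    + (K / 2%:R - (a ^+ 2 - 4%:R * a * c + c ^+ 2 + b ^+ 2) / 4%:R) * x ^+ 2 = 0
  /\ C2 + (1 - a * (b ^+ 2 + c ^+ 2 - a * c) / 2%:R) * x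
       + (a - c) / 2%:R * x ^+ 3 = 0.
Proof.
move=> hQ x; have h4 : (4%:R : R[i])^-1 = (4%:R^-1 : R)%:C.
  by rewrite rmorphV ?rmorph_nat // unitfE pnatr_eq0.
have : Qpoly K (Complex C1 C2) x%:C - Qfact a b c x%:C = 0 by rewrite hQ subrr.
rewrite /Qpoly /Qfact h4 !exprS expr0 /real_complex_def; simpc.
by case=> re im; split; [rewrite -re | rewrite -im]; field.
Qed.

Lemma Qpoly_eq_Qfact_coefs (R : rcfType) (K : R) (C : R[i]) (a b c : R) :
  (forall z, Qpoly K C z = Qfact a b c z) ->
  [/\ c = a, a * b ^+ 2 = 2%:R, K = b ^+ 2 / 2%:R - a ^+ 2
    & C = (- ((b ^+ 2 + a ^+ 2) * a ^+ 2 / 4%:R))%:C].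
Proof.
case: C => C1 C2 /Qpoly_eq_Qfact_on_reals /all_and2 [re im].
have [C1E KE] := even_quadratic_fun_eq0 re.
have [C2E iE acE] := odd_cubic_fun_eq0 im.
have ca : c = a by lra.
subst c; split => //.
- by nra.
- by lra.
- by rewrite /real_complex_def; congr Complex; lra.
Qed.

Lemma sextic_pos_root_unique (R : realDomainType) (K x y : R) :
  0 < x -> 0 < y ->
  x ^+ 6 - 2%:R * K * x ^+ 4 - 8%:R = 0 -> y ^+ 6 - 2%:R * K * y ^+ 4 - 8%:R = 0 ->
  x = y.
Proof.
move=> x0 y0 rx ry.
have factor : (x ^+ 2 - y ^+ 2) * (x ^+ 4 * y ^+ 4 + 8%:R * (x ^+ 2 + y ^+ 2))
    = y ^+ 4 * (x ^+ 6 - 2%:R * K * x ^+ 4 - 8%:R)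
      - x ^+ 4 * (y ^+ 6 - 2%:R * K * y ^+ 4 - 8%:R) by ring.
have pos : 0 < x ^+ 4 * y ^+ 4 + 8%:R * (x ^+ 2 + y ^+ 2).
  by rewrite addr_gt0 ?mulr_gt0 ?addr_gt0 ?exprn_gt0.
move: factor; rewrite rx ry !mulr0 subrr => /eqP.
rewrite mulf_eq0 (gt_eqF pos) orbF subr_eq0 eqrXn2 ?ltW //.
by move/eqP.
Qed.

Theorem lemma3p1 (R : rcfType) (K : R) (C : R[i]) (a b c : R)
  (hb : 0 < b)
  (hQ : forall z : R[i], Qpoly K C z = Qfact a b c z) :
  [/\ b ^+ 6 - 2%:R * K * b ^+ 4 - 8%:R = 0,
      (forall x : R, 0 < x -> x ^+ 6 - 2%:R * K * x ^+ 4 - 8%:R = 0 -> x = b),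
      a = 2%:R / b ^+ 2,
      c = 2%:R / b ^+ 2 &
      C = (- ((b ^+ 6 + 4%:R) / b ^+ 8))%:C].
Proof.
have [-> ab2 -> ->] := Qpoly_eq_Qfact_coefs hQ.
have b_neq0 : b != 0 by rewrite gt_eqF.
have -> : a = 2%:R / b ^+ 2 by rewrite -ab2 mulfK ?expf_neq0.
have root_b : b ^+ 6 - 2%:R * (b ^+ 2 / 2%:R - (2%:R / b ^+ 2) ^+ 2) * b ^+ 4 - 8%:R = 0.
  by field.
split => //.
- by move=> x x0 /sextic_pos_root_unique; apply.
- by congr (_%:C); field.
Qed.
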